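(* There exists $p\in\mathcal{P}$ such that $\mathrm{Stab}_{G^*}(p)=\langle\varphi\rangle$ for some $2n$-cycle $\varphi\in\mathrm{Sym}(I)$.
   Context: Fix $n\ge 2$, $W=\{1,\dots,n\}$, $M=\{n+1,\dots,2n\}$, $I=W\cup M$. Permutations compose right-to-left. A preference profile is a function $p$ on $I$ assigning to each $x\in W$ a linear order $p(x)$ on $M$ and to each $y\in M$ a linear order $p(y)$ on $W$; $\mathcal{P}$ is the set of preference profiles. $G^*=\{\varphi\in\mathrm{Sym}(I):\{\varphi(W),\varphi(M)\}=\{W,M\}\}$. For a linear order $R$ on $X\subseteq I$ and $\varphi\in\mathrm{Sym}(I)$, $\varphi R$ is the relation on $\varphi(X)$ with $(a,b)\in\varphi R$ iff $(\varphi^{-1}(a),\varphi^{-1}(b))\in R$. For $\varphi\in G^*$, $p^\varphi(z)=\varphi\,p(\varphi^{-1}(z))$, and $\mathrm{Stab}_{G^*}(p)=\{\varphi\in G^*:p^\varphi=p\}$. *)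

From mathcomp Require Import all_boot all_fingroup.
Set Implicit Arguments. Unset Strict Implicit. Unset Printing Implicit Defensive.

(* Agents are I = 'I_(2n); W = {0,...,n-1} (paper: 1..n),
   M = {n,...,2n-1} (paper: n+1..2n). *)
Definition I (n : nat) := 'I_(2 * n).
Definition W (n : nat) : {set I n} := [set i : I n | i < n].
Definition M (n : nat) : {set I n} := [set i : I n | n <= i].

Definition lin_order (T : finType) (X : {set T}) (R : rel T) : Prop :=
  [/\ (forall a b, R a b -> (a \in X) && (b \in X)),
      (forall a, ~~ R a a),
      (forall a b c, R a b -> R b c -> R a c) &
      (forall a b, a \in X -> b \in X -> a != b -> R a b || R b a)].

Definition profile_fun (n : nat) := I n -> rel (I n).

Definition is_profile (n : nat) (p : profile_fun n) : Prop :=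
  (forall x, x \in W n -> lin_order (M n) (p x)) /\
  (forall y, y \in M n -> lin_order (W n) (p y)).

Definition Gstar (n : nat) : {set {perm I n}} :=
  [set phi : {perm I n} |
     ((phi @: W n == W n) && (phi @: M n == M n)) ||
     ((phi @: W n == M n) && (phi @: M n == W n))].

(* p^phi (z) = phi p(phi^-1 z), where (a,b) in phi R iff
   (phi^-1 a, phi^-1 b) in R. *)
Definition profile_act (n : nat) (phi : {perm I n}) (p : profile_fun n)
  : profile_fun n :=
  fun z a b => p ((phi^-1)%g z) ((phi^-1)%g a) ((phi^-1)%g b).

Definition Stab (n : nat) (p : profile_fun n) : {set {perm I n}} :=
  [set phi in Gstar n |
     [forall z, [forall a, [forall b, profile_act phi p z a b == p z a b]]]].

Definition is_2n_cycle (n : nat) (phi : {perm I n}) : Prop :=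
  exists x : I n, #|porbit phi x| = 2 * n.

From mathcomp Require Import all_boot all_fingroup zify.
Set Implicit Arguments. Unset Strict Implicit. Unset Printing Implicit Defensive.

(* Seat the 2n agents around a round table, alternating between W and M, and
   let every agent rank the other side by clockwise distance, nearest first.
   Rotating the table by one seat swaps the two sides and preserves all
   distances, so it generates a cyclic subgroup of order 2n of the stabilizer.
   Conversely, a stabilizing permutation sends the first choice of each agent,
   namely its clockwise neighbour, to the first choice of its image; hence it
   commutes with the rotation, and the centralizer of a 2n-cycle is the group
   it generates. *)

Lemma commute_full_porbit_cycle (T : finType) (f s : {perm T}) x :
  porbit f x = [set: T] -> commute s f -> s \in <[f]>%g.
Proof.
move=> f_full sf.
have /porbitP [k sxE] : s x \in porbit f x by rewrite f_full inE.
suff -> : s = (f ^+ k)%g by apply: mem_cycle.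
apply/permP => y; have /porbitP [j ->] : y \in porbit f x by rewrite f_full inE.
by rewrite -permM -(commuteX j sf) permM sxE -!permM -!expgD addnC.
Qed.

Lemma imset_perm_flip (T : finType) (A : {set T}) (s : {perm T}) t :
  (forall x, (s x \in A) = (x \in A) (+) t) -> s @: A = if t then ~: A else A.
Proof.
move=> sA; apply/setP => y; rewrite -{1}(permKV s y) mem_imset; last exact: perm_inj.
move: (sA (s^-1 y)%g); rewrite permKV {sA}.
by case: t; rewrite ?inE => ->; rewrite ?addbT ?addbF ?negbK.
Qed.

Lemma lin_order_ltn (T : finType) (X : {set T}) (P : pred T) (f : T -> nat) :
  (forall a, (a \in X) = P a) -> injective f ->
  lin_order X [rel a b | [&& P a, P b & f a < f b]].
Proof.
move=> XP f_inj; split=> [a b /and3P [Pa Pb _] | a | a b c | a b].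
- by rewrite !XP Pa Pb.
- by rewrite /= ltnn !andbF.
- by move=> /and3P [Pa _ ab] /and3P [_ Pc bc]; rewrite /= Pa Pc (ltn_trans ab bc).
- rewrite !XP /= => -> -> ab.
  by case: ltngtP => // /f_inj abE; rewrite abE eqxx in ab.
Qed.

(* [r a b] reads "a is ranked above b"; the witness [b] puts [a] in the field
   of [r]. *)
Definition first_choice (T : Type) (r : rel T) (a : T) : Prop :=
  (exists b, r a b) /\ forall b, ~~ r b a.

Lemma first_choice_perm (T : finType) (s : {perm T}) (r r' : rel T) a :
  (forall a b, r' (s a) (s b) = r a b) -> first_choice r a -> first_choice r' (s a).
Proof.
move=> rr' [[b rab] a_first]; split=> [|c]; first by exists (s b); rewrite rr'.
by rewrite -(permKV s c) rr'.
Qed.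

Lemma W_setC n : W n = ~: M n.
Proof. by apply/setP => x; rewrite !inE ltnNge. Qed.

Lemma Gstar_flip n (s : {perm I n}) t :
  (forall x, (s x \in M n) = (x \in M n) (+) t) -> s \in Gstar n.
Proof.
move=> sM; have sW x : (s x \in W n) = (x \in W n) (+) t.
  by rewrite W_setC !in_setC sM addNb.
rewrite inE (imset_perm_flip sW) (imset_perm_flip sM) W_setC setCK.
by clear; case: t; rewrite !eqxx ?orbT.
Qed.

Lemma StabP n (p : profile_fun n) (s : {perm I n}) :
  reflect (s \in Gstar n /\ forall z a b, p (s z) (s a) (s b) = p z a b)
          (s \in Stab p).
Proof.
rewrite [_ \in Stab p]inE; apply: (iffP andP) => -[sG sp]; split=> //.
- move=> z a b; move/forallP/(_ (s z))/forallP/(_ (s a))/forallP/(_ (s b)): sp.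
  by rewrite /profile_act !permK => /eqP.
- apply/forallP => z; apply/forallP => a; apply/forallP => b; apply/eqP.
  by rewrite /profile_act -sp !permKV.
Qed.

Section Rotation.

Variable n : nat.
Implicit Types x z a b : I n.

Definition pos x : nat := if x < n then 2 * x else (2 * (x - n)).+1.

Lemma pos_lt x : pos x < 2 * n.
Proof. by rewrite /pos; have := ltn_ord x; case: ifP; lia. Qed.

Lemma pos_inj : injective pos.
Proof.
move=> x y; have := ltn_ord x; have := ltn_ord y.
by rewrite /pos => ? ?; case: ifP; case: ifP => ? ? ?; apply: ord_inj; lia.
Qed.

Lemma odd_pos x : odd (pos x) = (x \in M n).
Proof. by rewrite /pos inE; case: (ltnP x n) => _; lia. Qed.

Definition seat x : I n := Ordinal (pos_lt x).

Lemma seat_inj : injective seat.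
Proof. by move=> x y /(congr1 val) /pos_inj. Qed.

(* One seat clockwise: the cyclic shift [ordS] of seats, read through [seat]. *)
Definition rot : {perm I n} :=
  (perm seat_inj * perm (@ordS_inj (2 * n)) * (perm seat_inj)^-1)%g.

Lemma pos_rot x : pos (rot x) = (pos x).+1 %% (2 * n).
Proof.
rewrite -[pos _]/(val (seat _)) /rot !permM -[seat _](permE seat_inj) permKV.
by rewrite !permE.
Qed.

Lemma pos_rotX k x : pos ((rot ^+ k)%g x) = (pos x + k) %% (2 * n).
Proof.
elim: k => [|k IH]; first by rewrite expg0 perm1 addn0 modn_small ?pos_lt.
by rewrite expgSr permM pos_rot IH -[(_ %% _).+1]addn1 modnDml addn1 addnS.
Qed.

Definition dist z a : nat := (pos a + (2 * n - pos z)) %% (2 * n).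

Lemma rotX_dist z a : (rot ^+ dist z a)%g z = a.
Proof.
apply: pos_inj; rewrite pos_rotX modnDmr.
have := pos_lt z; have := pos_lt a => ? ?.
have -> : pos z + (pos a + (2 * n - pos z)) = pos a + 2 * n by lia.
by rewrite modnDr modn_small.
Qed.

Lemma dist_rotXr z k : k < 2 * n -> dist z ((rot ^+ k)%g z) = k.
Proof.
move=> lt_k; rewrite /dist pos_rotX modnDml; have := pos_lt z => ?.
have -> : pos z + k + (2 * n - pos z) = k + 2 * n by lia.
by rewrite modnDr modn_small.
Qed.

Lemma dist_lt z a : dist z a < 2 * n.
Proof. by rewrite ltn_pmod // (leq_ltn_trans _ (pos_lt z)). Qed.

Lemma dist_inj z : injective (dist z).
Proof. by move=> a b eq_ab; rewrite -(rotX_dist z a) eq_ab rotX_dist. Qed.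

Lemma dist_rotX k z a : dist ((rot ^+ k)%g z) ((rot ^+ k)%g a) = dist z a.
Proof.
rewrite -{1}(rotX_dist z a) -permM -expgD addnC expgD permM.
by rewrite dist_rotXr // dist_lt.
Qed.

Lemma mem_M_rotX k x : ((rot ^+ k)%g x \in M n) = (x \in M n) (+) odd k.
Proof. by rewrite -!odd_pos pos_rotX odd_mod ?oddM // oddD. Qed.

Lemma odd_dist z a : odd (dist z a) = ((z \in M n) != (a \in M n)).
Proof.
by rewrite -{2}(rotX_dist z a) mem_M_rotX; case: (z \in M n); case: (odd _).
Qed.

(* The other side of [z] consists of the agents at odd distance (odd_dist). *)
Definition clockwise_profile : profile_fun n :=
  fun z => [rel a b | [&& odd (dist z a), odd (dist z b) & dist z a < dist z b]].

Lemma clockwise_profile_is_profile : is_profile clockwise_profile.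
Proof.
split=> z zS; apply: (lin_order_ltn (P := fun a => odd (dist z a)))
  (dist_inj (z := z)) => a; rewrite odd_dist.
- by move: zS; rewrite W_setC in_setC => /negbTE ->; case: (a \in M n).
- by rewrite zS W_setC in_setC; case: (a \in M n).
Qed.

Lemma clockwise_profile_rotX k z a b :
  clockwise_profile ((rot ^+ k)%g z) ((rot ^+ k)%g a) ((rot ^+ k)%g b)
  = clockwise_profile z a b.
Proof. by rewrite /clockwise_profile /= !dist_rotX. Qed.

Lemma first_choice_clockwise_profile (n_gt1 : 1 < n) z a :
  first_choice (clockwise_profile z) a <-> a = rot z.
Proof.
have dist1 : dist z (rot z) = 1 by rewrite -[rot]expg1 dist_rotXr; lia.
split=> [[[b /and3P [odd_a _ _]] a_first] | ->].
- apply: (dist_inj (z := z)); rewrite dist1.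
  by move: (a_first (rot z)); rewrite /clockwise_profile /= dist1 odd_a; lia.
- split=> [|b]; last by rewrite /clockwise_profile /= dist1; lia.
  by exists ((rot ^+ 3)%g z); rewrite /clockwise_profile /= dist1 dist_rotXr //; lia.
Qed.

Lemma porbit_rot x : porbit rot x = [set: I n].
Proof. by apply/setP => y; rewrite inE -(rotX_dist x y) mem_porbit. Qed.

End Rotation.

Theorem proposition16 (n : nat) (hn : 2 <= n) :
  exists p : profile_fun n, is_profile p /\
    exists phi : {perm I n}, is_2n_cycle phi /\ Stab p = <[phi]>%g.
Proof.
have x0 : I n by exists 0; lia.
exists (@clockwise_profile n); split; first exact: clockwise_profile_is_profile.
exists (rot n); split; first by exists x0; rewrite porbit_rot cardsT card_ord.
apply/setP => s; apply/idP/idP.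
- case/StabP => _ s_prof; apply: commute_full_porbit_cycle (porbit_rot x0) _.
  apply/permP => z; rewrite (permM s) (permM (rot n)).
  apply/esym/(first_choice_clockwise_profile hn).
  by apply: first_choice_perm (s_prof z) _; apply/(first_choice_clockwise_profile hn).
- case/cycleP => k ->; apply/StabP; split; last exact: clockwise_profile_rotX.
  exact: Gstar_flip (mem_M_rotX k).
Qed.
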